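(* There exists a continuous, differentiable curve $s$ in $\mathbb{R}^2$ of finite length with no cross-over (that is, $t\mapsto s(t)$ is one-to-one) such that, for every $R>0$, $s$ is not $R$-monotone.
   Context: A closed ball is a set $\{x:\|x-a\|\le \rho\}$ with center $a$ and radius $\rho$. For $R>0$, a curve $s$ (considered with its arc-length parametrization) is called $R$-monotone if the inverse image under $s$ of every closed ball of radius at most $R$ is a connected subset of the parameter domain. *)

From HB Require Import structures.
From mathcomp Require Import all_boot all_order all_algebra.
From mathcomp Require Import all_classical all_reals all_analysis.
Set Implicit Arguments. Unset Strict Implicit. Unset Printing Implicit Defensive.
Import Order.TTheory GRing.Theory Num.Theory.
Import numFieldNormedType.Exports.
Local Open Scope classical_set_scope.
Local Open Scope ring_scope.

Definition dist2 (R : realType) (p q : R * R) : R :=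
  Num.sqrt ((p.1 - q.1) ^+ 2 + (p.2 - q.2) ^+ 2).

Definition poly_len (R : realType) (s : R -> R * R) (ts : seq R) : R :=
  \sum_(i < (size ts).-1) dist2 (s (nth 0 ts i)) (s (nth 0 ts i.+1)).

Definition arc_length (R : realType) (s : R -> R * R) (a b : R) : \bar R :=
  ereal_sup [set (poly_len s ts)%:E | ts in
    [set ts : seq R | sorted <=%R ts /\ all (fun t => a <= t <= b) ts]].

Definition arclength_param (R : realType) (s : R -> R * R) (L : R) : Prop :=
  forall t, 0 <= t <= L -> arc_length s 0 t = t%:E.

Definition R_monotone (R : realType) (s : R -> R * R) (L Rad : R) : Prop :=
  forall (a : R * R) (rho : R), 0 <= rho -> rho <= Rad ->
    connected [set t : R | 0 <= t <= L /\ dist2 (s t) a <= rho].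

From HB Require Import structures.
From mathcomp Require Import all_boot all_order all_algebra.
From mathcomp Require Import all_classical all_reals all_analysis.
From mathcomp Require Import ring lra.
Import Order.TTheory GRing.Theory Num.Theory.
Import numFieldNormedType.Exports.
Local Open Scope classical_set_scope.
Local Open Scope ring_scope.

Set Implicit Arguments. Unset Strict Implicit. Unset Printing Implicit Defensive.

(* Take the unit-speed curve s(t) = int_{-1}^t (cos th, sin th) whose tangent
   angle th(t) = sgn(t - 1) sqrt|t - 1| is continuous and nondecreasing.  Unit
   speed bounds every chord by its parameter gap, and the slow turning of the
   tangent bounds the chord over [x, y] below by (y - x)(1 - (th y - th x)), so
   inscribed polygons over fine uniform partitions have length close to the
   parameter length: s is parametrized by arc length.  On [0, 2] we have
   |th| <= 1 < pi/2, so the abscissa is strictly increasing and s is injective.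
   At t = 1 the tangent is horizontal but th' is unbounded: s(1 +- u) lies at
   least of order u^(3/2) above s(1), while |s(1 +- u) - s(1)| <= u.  Hence the
   ball centred at s(1) + (0, d) whose radius is the larger of the distances to
   s(1 +- u), for u of order d^2, contains s(1 - u) and s(1 + u) but not s(1),
   and its preimage is not an interval. *)

Section Trigonometry.
Variable R : realType.

Lemma subr1_le_cos (x : R) : 0 <= x -> 1 - x <= cos x.
Proof.
rewrite le_eqVlt => /predU1P[<-|x0]; first by rewrite cos0 subr0.
have [c _] := MVT x0 (fun c _ => @is_derive_cos R c)
  (continuous_subspaceT (@continuous_cos R)).
rewrite cos0 subr0 => /eqP; rewrite subr_eq => /eqP ->.
have := sin_le1 c; nra.
Qed.

Lemma cos1_le_cos (x : R) : `|x| <= 1 -> cos 1 <= cos x.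
Proof.
move=> x1; have one_le_pi : (1 : R) <= pi by apply: le_trans (pi_ge2 R); lra.
rewrite -[cos x]cos_norm leNgt ltr_cos ?in_itv /= ?normr_ge0 ?ler01 //.
  by rewrite -leNgt.
by rewrite (le_trans x1).
Qed.

Lemma cos1_mul_le_sin (x : R) : 0 <= x <= 1 -> cos 1 * x <= sin x.
Proof.
move=> /andP[]; rewrite le_eqVlt => /predU1P[<- _|x0 x1].
  by rewrite sin0 mulr0.
have [c /itvP c_in] := MVT x0 (fun c _ => @is_derive_sin R c)
  (continuous_subspaceT (@continuous_sin R)).
rewrite sin0 !subr0 => ->.
have [c0 cx] : 0 < c /\ c < x by rewrite !c_in.
have : cos 1 <= cos c.
  by apply: cos1_le_cos; rewrite ler_norml; apply/andP; split; lra.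
nra.
Qed.

End Trigonometry.

Section PlaneGeometry.
Variable R : realType.
Implicit Types (p q : R * R).

Lemma dist2C p q : dist2 p q = dist2 q p.
Proof. by rewrite /dist2 -sqrrN opprB -[X in _ + X]sqrrN opprB. Qed.

Lemma dist2_ge0 p q : 0 <= dist2 p q.
Proof. exact: sqrtr_ge0. Qed.

Lemma dot_unit_le_sqrt (u1 u2 w1 w2 : R) : w1 ^+ 2 + w2 ^+ 2 = 1 ->
  u1 * w1 + u2 * w2 <= Num.sqrt (u1 ^+ 2 + u2 ^+ 2).
Proof.
move=> w_unit; have : (u1 * w1 + u2 * w2) ^+ 2 <= u1 ^+ 2 + u2 ^+ 2.
  rewrite -[X in _ <= X]mulr1 -w_unit; have := sqr_ge0 (u1 * w2 - u2 * w1); nra.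
by rewrite -ler_sqrt ?addr_ge0 ?sqr_ge0 // sqrtr_sqr => /(le_trans (ler_norm _)).
Qed.

Lemma dist2_shift_up p (d : R) : 0 <= d -> dist2 p (p.1, p.2 + d) = d.
Proof.
move=> d0; rewrite /dist2 /= subrr expr0n add0r -sqrrN opprB addrC addKr.
by rewrite sqrtr_sqr ger0_norm.
Qed.

Lemma dist2_shift_up_lt p q (d u h : R) : 0 < d ->
  dist2 p q <= u -> h <= q.2 - p.2 -> u ^+ 2 < 2 * d * h ->
  dist2 q (p.1, p.2 + d) < d.
Proof.
move=> d0 pq_le_u rise small_u.
have pq2 : (q.1 - p.1) ^+ 2 + (q.2 - p.2) ^+ 2 <= u ^+ 2.
  rewrite dist2C /dist2 in pq_le_u.
  rewrite -(sqr_sqrtr (_ : 0 <= _ + _)) ?addr_ge0 ?sqr_ge0 //.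
  by rewrite ler_sqr ?nnegrE ?sqrtr_ge0 // (le_trans (sqrtr_ge0 _) pq_le_u).
rewrite -[X in _ < X]gtr0_norm // -sqrtr_sqr /dist2 /= ltr_sqrt ?exprn_gt0 //.
nra.
Qed.

End PlaneGeometry.

Lemma ler_of_forall_subr_div (R : archiRealFieldType) (x y K : R) :
  (forall n : nat, (0 < n)%N -> x - K / n%:R <= y) -> x <= y.
Proof.
move=> xy; apply/ler_addgt0Pr => e e0.
pose n := (Num.truncn (`|K| / e)).+1.
have n_pos : (0 : R) < n%:R by rewrite ltr0n.
have Kn_lt_e : K / n%:R < e.
  apply: le_lt_trans (_ : `|K| / n%:R < e).
    by rewrite ler_pM2r ?invr_gt0 // ler_norm.
  by rewrite ltr_pdivrMr // mulrC -ltr_pdivrMr // truncnS_gt.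
by have := xy n isT; rewrite lerBlDr => /le_trans; apply; rewrite lerD2l ltW.
Qed.

Section ArcLength.
Variables (R : realType) (s : R -> R * R) (g : R -> R) (b c : R).
Hypothesis b_le_c : b <= c.
Hypothesis chord_le : forall x y, b <= x -> x <= y -> y <= c ->
  dist2 (s x) (s y) <= y - x.
Hypothesis chord_ge : forall x y, b <= x -> x <= y -> y <= c ->
  (y - x) * (1 - (g y - g x)) <= dist2 (s x) (s y).

Definition uniform_partition (n : nat) : seq R :=
  mkseq (fun i => b + (c - b) * i%:R / n%:R) n.+1.

Lemma poly_len_le ts : sorted <=%R ts -> all (fun t => b <= t <= c) ts ->
  poly_len s ts <= c - b.
Proof.
move=> ts_sorted /all_nthP ts_in; rewrite /poly_len.
have [/size0nil->|ts_gt0] := posnP (size ts); first by rewrite big_ord0 subr_ge0.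
have ts_last : ((size ts).-1 < size ts)%N by rewrite prednK.
apply: (@le_trans _ _ (\sum_(i < (size ts).-1) (nth 0 ts i.+1 - nth 0 ts i))).
  apply: ler_sum => i _; have i1_lt : (i.+1 < size ts)%N by rewrite -ltn_predRL.
  have i_lt : (i < size ts)%N := ltn_trans (ltnSn i) i1_lt.
  have /andP[bi _] := ts_in 0 i i_lt; have /andP[_ i1c] := ts_in 0 i.+1 i1_lt.
  by apply: chord_le => //; apply: (sorted_leq_nth le_trans lexx); rewrite ?inE.
rewrite -(big_mkord xpredT (fun i => nth 0 ts i.+1 - nth 0 ts i)).
rewrite telescope_sumr //.
have /andP[_ lastc] := ts_in 0 _ ts_last.
have /andP[bfirst _] := ts_in 0 _ ts_gt0.
by rewrite lerB.
Qed.

Lemma uniform_partition_admissible n : (0 < n)%N ->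
  sorted <=%R (uniform_partition n) /\
  all (fun t => b <= t <= c) (uniform_partition n).
Proof.
move=> n_gt0; have n_pos : (0 : R) < n%:R by rewrite ltr0n.
have cb0 : 0 <= c - b by rewrite subr_ge0.
have nodes_homo : {homo (fun i : nat => b + (c - b) * i%:R / n%:R) :
    i j / (i <= j)%N >-> i <= j}.
  by move=> i j ij; rewrite lerD2l ler_pM2r ?invr_gt0 // ler_wpM2l // ler_nat.
split; first exact/(homo_sorted nodes_homo)/iota_sorted.
apply/allP => t /mapP[i]; rewrite mem_iota add0n ltnS => /andP[_ i_le_n] ->.
rewrite lerDl divr_ge0 ?mulr_ge0 ?ler0n //= -lerBrDl ler_pdivrMr //.
by rewrite ler_wpM2l // ler_nat.
Qed.

Lemma poly_len_uniform_partition_ge n : (0 < n)%N ->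
  (c - b) - (c - b) * (g c - g b) / n%:R <= poly_len s (uniform_partition n).
Proof.
move=> n_gt0; rewrite mulrAC; have n_pos : (0 : R) < n%:R by rewrite ltr0n.
pose node i : R := b + (c - b) * i%:R / n%:R.
set h := (c - b) / n%:R.
have step i : node i.+1 - node i = h.
  by rewrite /node /h -natr1; field; rewrite gt_eqF.
have [_ /all_nthP nodes_in] := uniform_partition_admissible n_gt0.
rewrite /uniform_partition size_mkseq in nodes_in.
rewrite /poly_len size_mkseq.
apply: (@le_trans _ _ (\sum_(i < n) h * (1 - (g (node i.+1) - g (node i))))).
  rewrite -(big_mkord xpredT (fun i => h * (1 - (g (node i.+1) - g (node i))))).
  under eq_bigr do rewrite mulrBr mulr1.
  rewrite sumrB sumr_const_nat -mulr_sumr telescope_sumr // subn0.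
  rewrite /node mulr0 mul0r addr0 mulfK ?gt_eqF // subrKC -mulr_natr.
  by rewrite /h mulfVK ?gt_eqF.
apply: ler_sum => i _.
have i_lt : (i < n.+1)%N := ltn_trans (ltn_ord i) (ltnSn n).
have i1_lt : (i.+1 < n.+1)%N := ltn_ord i.
have /andP[bi _] := nodes_in 0 i i_lt; have /andP[_ i1c] := nodes_in 0 i.+1 i1_lt.
rewrite !nth_mkseq // -/(node i) -/(node i.+1) in bi i1c *.
rewrite -(step i); apply: chord_ge => //.
by rewrite -subr_ge0 (step i) divr_ge0 ?subr_ge0 // ltW.
Qed.

Lemma arc_length_of_chord_bounds : arc_length s b c = (c - b)%:E.
Proof.
rewrite /arc_length; set S := [set _ | _ in _].
have S_ub : (ereal_sup S <= (c - b)%:E)%E.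
  apply: ge_ereal_sup => _ [ts [ts_sorted ts_in] <-].
  by rewrite lee_fin poly_len_le.
have S_lb n : (0 < n)%N ->
    (((c - b) - (c - b) * (g c - g b) / n%:R)%:E <= ereal_sup S)%E.
  move=> n_gt0; have S_n : S (poly_len s (uniform_partition n))%:E.
    by exists (uniform_partition n) => //; exact: uniform_partition_admissible.
  apply: le_trans (ereal_sup_ubound S_n).
  by rewrite lee_fin; exact: poly_len_uniform_partition_ge.
apply/le_anti/andP; split => //; move: S_lb.
case: (ereal_sup S) => [x | | ] S_lb; [|exact: leey|by have := S_lb 1%N isT].
rewrite lee_fin; apply: ler_of_forall_subr_div => n n_gt0.
by move: (S_lb n n_gt0); rewrite lee_fin; apply.
Qed.

End ArcLength.

Lemma is_derive_integral (R : realType) (f : R -> R) (a t : R) :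
  continuous f -> a < t ->
  is_derive t 1 (fun u => \int[lebesgue_measure]_(x in `[a, u]) f x)%R (f t).
Proof.
move=> f_cont a_lt_t.
have f_int : lebesgue_measure.-integrable `[a, t + 1] (EFin \o f).
  apply: continuous_compact_integrable; first exact: segment_compact.
  exact: continuous_subspaceT.
have t_lt : t < t + 1 by rewrite ltrDl.
have [f_der <-] := continuous_FTC1_closed t_lt f_int a_lt_t (f_cont t).
by rewrite derive1E; exact: derivableP.
Qed.

Section TangentCurve.
Variables (R : realType) (theta : R -> R) (a : R).
Hypothesis theta_cont : continuous theta.

(* The base point [a] is kept strictly to the left of every parameter used, so
   that the fundamental theorem of calculus gives two-sided derivatives. *)
Definition tangent_curve (t : R) : R * R :=
  ((\int[lebesgue_measure]_(x in `[a, t]) cos (theta x))%R,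
   (\int[lebesgue_measure]_(x in `[a, t]) sin (theta x))%R).

Local Notation s := tangent_curve.
Local Notation proj v1 v2 t := (v1 * (s t).1 + v2 * (s t).2).

Lemma is_derive_tangent_curve t : a < t ->
  is_derive t 1 (fun u => (s u).1) (cos (theta t)) /\
  is_derive t 1 (fun u => (s u).2) (sin (theta t)).
Proof.
move=> a_lt_t; split; apply: is_derive_integral => // x.
- by apply: continuous_comp; [exact: theta_cont|exact: continuous_cos].
- by apply: continuous_comp; [exact: theta_cont|exact: continuous_sin].
Qed.

Lemma derivable_tangent_curve t : a < t ->
  derivable (fun u => (s u).1) t 1 /\ derivable (fun u => (s u).2) t 1.
Proof. by move=> /is_derive_tangent_curve[dX dY]; split; apply: ex_derive. Qed.

Lemma is_derive_tangent_curve_proj (v1 v2 t : R) : a < t ->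
  is_derive t 1 (fun u => proj v1 v2 u) (v1 * cos (theta t) + v2 * sin (theta t)).
Proof.
move=> /is_derive_tangent_curve[dX dY].
exact: is_deriveD (is_deriveZ v1 dX) (is_deriveZ v2 dY).
Qed.

Lemma tangent_curve_proj_mvt (v1 v2 x y : R) : a < x -> x < y ->
  exists2 c, c \in `]x, y[ &
    proj v1 v2 y - proj v1 v2 x =
      (v1 * cos (theta c) + v2 * sin (theta c)) * (y - x).
Proof.
move=> a_lt_x x_lt_y.
apply: (@MVT _ (fun u => proj v1 v2 u)
  (fun c => v1 * cos (theta c) + v2 * sin (theta c))) => //.
- move=> c /itvP c_in; apply: is_derive_tangent_curve_proj.
  by apply: lt_trans a_lt_x _; rewrite c_in.
- apply: derivable_within_continuous => c /itvP c_in.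
  apply/ex_derive/is_derive_tangent_curve_proj.
  by apply: lt_le_trans a_lt_x _; rewrite c_in.
Qed.

Lemma tangent_curve_proj_ge (v1 v2 m x y : R) : a < x -> x <= y ->
  (forall c, x < c < y -> m <= v1 * cos (theta c) + v2 * sin (theta c)) ->
  m * (y - x) <= proj v1 v2 y - proj v1 v2 x.
Proof.
move=> a_lt_x; rewrite le_eqVlt => /predU1P[<-|x_lt_y slope_ge].
  by rewrite !subrr mulr0.
have [c /itvP c_in ->] := tangent_curve_proj_mvt v1 v2 a_lt_x x_lt_y.
by rewrite ler_wpM2r ?subr_ge0 ?(ltW x_lt_y) // slope_ge // !c_in.
Qed.

Lemma dist2_tangent_curve_le x y : a < x -> x <= y -> dist2 (s x) (s y) <= y - x.
Proof.
(* Mean value theorem for the projection onto the chord D = s y - s x: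
   |D|^2 = <D, s'(c)> (y - x) <= |D| (y - x). *)
move=> a_lt_x; rewrite le_eqVlt => /predU1P[<-|x_lt_y].
  by rewrite /dist2 !subrr expr0n addr0 sqrtr0.
rewrite dist2C /dist2.
set D1 := (s y).1 - (s x).1; set D2 := (s y).2 - (s x).2.
set N := Num.sqrt _.
have [c _ e] := tangent_curve_proj_mvt D1 D2 a_lt_x x_lt_y.
have N2 : N ^+ 2 = D1 * D1 + D2 * D2.
  by rewrite sqr_sqrtr ?addr_ge0 ?sqr_ge0 //; ring.
have : N ^+ 2 <= N * (y - x).
  rewrite N2 (_ : _ + _ = proj D1 D2 y - proj D1 D2 x); last first.
    by rewrite /D1 /D2; ring.
  by rewrite e ler_wpM2r ?subr_ge0 ?(ltW x_lt_y) // dot_unit_le_sqrt // cos2Dsin2.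
have := sqrtr_ge0 (D1 ^+ 2 + D2 ^+ 2); rewrite -/N; nra.
Qed.

Hypothesis theta_nondecr : {homo theta : x y / x <= y}.

Lemma dist2_tangent_curve_ge x y : a < x -> x <= y ->
  (y - x) * (1 - (theta y - theta x)) <= dist2 (s x) (s y).
Proof.
(* Project onto the unit tangent at x: the slope there is
   cos (theta c - theta x) >= 1 - (theta y - theta x). *)
move=> a_lt_x x_le_y; rewrite dist2C /dist2.
apply: le_trans (dot_unit_le_sqrt _ _ (cos2Dsin2 (theta x))).
rewrite (_ : _ + _ = proj (cos (theta x)) (sin (theta x)) y -
                     proj (cos (theta x)) (sin (theta x)) x); last by ring.
rewrite mulrC; apply: tangent_curve_proj_ge => // c /andP[x_lt_c c_lt_y].
rewrite -cosB -cosN (opprB (theta x)).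
apply: le_trans (subr1_le_cos _); last first.
  by rewrite subr_ge0 theta_nondecr // ltW.
by rewrite lerD2l lerN2 lerD2r theta_nondecr // ltW.
Qed.

Lemma arc_length_tangent_curve b c : a < b -> b <= c ->
  arc_length s b c = (c - b)%:E.
Proof.
move=> a_lt_b b_le_c.
apply: (@arc_length_of_chord_bounds _ _ theta) => // x y b_le_x x_le_y _.
- exact: dist2_tangent_curve_le (lt_le_trans a_lt_b b_le_x) x_le_y.
- exact: dist2_tangent_curve_ge (lt_le_trans a_lt_b b_le_x) x_le_y.
Qed.

Lemma tangent_curve_inj b c : a < b ->
  {in `]b, c[, forall t, 0 < cos (theta t)} -> {in `[b, c] &, injective s}.
Proof.
move=> a_lt_b cos_pos.
have abscissa_lt x y : b <= x -> x < y -> y <= c -> (s x).1 < (s y).1.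
  move=> b_le_x x_lt_y y_le_c.
  have a_lt_x := lt_le_trans a_lt_b b_le_x.
  have [t /itvP t_in] := tangent_curve_proj_mvt 1 0 a_lt_x x_lt_y.
  rewrite !mul1r !mul0r !addr0 -subr_gt0 => ->.
  rewrite mulr_gt0 ?subr_gt0 // cos_pos // in_itv /=.
  by rewrite (le_lt_trans b_le_x) ?(lt_le_trans _ y_le_c) ?t_in.
move=> x y /[!in_itv] /andP[b_le_x x_le_c] /andP[b_le_y y_le_c] sxy.
have [x_lt_y|y_lt_x|//] := ltgtP x y.
- by have := abscissa_lt x y b_le_x x_lt_y y_le_c; rewrite sxy ltxx.
- by have := abscissa_lt y x b_le_y y_lt_x x_le_c; rewrite sxy ltxx.
Qed.

End TangentCurve.

Section SignedSqrt.
Variable R : realType.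

Definition signed_sqrt (x : R) : R :=
  Num.sqrt (Num.max x 0) - Num.sqrt (Num.max (- x) 0).

Lemma signed_sqrtE x : 0 <= x -> signed_sqrt x = Num.sqrt x.
Proof.
move=> x0; rewrite /signed_sqrt (max_l x0) max_r ?oppr_le0 //.
by rewrite sqrtr0 subr0.
Qed.

Lemma signed_sqrtN x : signed_sqrt (- x) = - signed_sqrt x.
Proof. by rewrite /signed_sqrt opprK opprB. Qed.

Lemma continuous_signed_sqrt : continuous signed_sqrt.
Proof.
have sqrt_pos_part (f : R -> R) : continuous f ->
    continuous (fun x => Num.sqrt (Num.max (f x) 0)).
  move=> f_cont x; apply: continuous_comp; last exact: sqrt_continuous.
  have : {for x, continuous (f \max (fun=> 0))}.
    by apply: continuous_max; [exact: f_cont|exact: cvg_cst].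
  by [].
move=> x; have : {for x, continuous ((fun y => Num.sqrt (Num.max y 0)) -
                                     (fun y => Num.sqrt (Num.max (- y) 0)))}.
  apply: cvgB; apply: sqrt_pos_part => y; [exact: cvg_id|exact: opp_continuous].
by [].
Qed.

Lemma signed_sqrt_nondecr : {homo signed_sqrt : x y / x <= y}.
Proof.
move=> x y x_le_y; have pos_part_ge0 z : (0 : R) <= Num.max z 0.
  by rewrite le_max lexx orbT.
by apply: lerB; rewrite ler_sqrt //; apply: le_max2; rewrite ?lerN2.
Qed.

Lemma norm_signed_sqrt_le1 x : `|x| <= 1 -> `|signed_sqrt x| <= 1.
Proof.
wlog x0 : x / 0 <= x => [wlog_x0|].
  have [/wlog_x0//|x_lt0] := leP 0 x.
  rewrite -[x]opprK signed_sqrtN !normrN -normrN.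
  by apply: wlog_x0; rewrite oppr_ge0 ltW.
rewrite signed_sqrtE // ger0_norm ?sqrtr_ge0 // ger0_norm // => x_le1.
by rewrite -sqrtr1 ler_sqrt.
Qed.

Lemma cos1_mul_sqrt_le_sin_signed_sqrt x : 0 <= x <= 1 ->
  cos 1 * Num.sqrt x <= sin (signed_sqrt x).
Proof.
move=> /andP[x0 x1]; rewrite signed_sqrtE //; apply: cos1_mul_le_sin.
by rewrite sqrtr_ge0 -sqrtr1 ler_sqrt.
Qed.

End SignedSqrt.

Section Curve.
Variable R : realType.

Definition curve_angle (t : R) : R := signed_sqrt (t - 1).

Definition curve : R -> R * R := tangent_curve curve_angle (-1).

Lemma continuous_curve_angle : continuous curve_angle.
Proof.
move=> t; have : {for t, continuous (@signed_sqrt R \o (fun x => x - 1))}.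
  apply: continuous_comp; last exact: continuous_signed_sqrt.
  by apply: cvgB; [exact: cvg_id|exact: cvg_cst].
by [].
Qed.

Lemma curve_angle_nondecr : {homo curve_angle : x y / x <= y}.
Proof. by move=> x y x_le_y; apply: signed_sqrt_nondecr; rewrite lerD2r. Qed.

Lemma cos_curve_angle_gt0 t : 0 <= t <= 2 -> 0 < cos (curve_angle t).
Proof.
move=> t_in; apply: lt_le_trans (cos1_gt0 R) (cos1_le_cos _).
by apply: norm_signed_sqrt_le1; rewrite ler_norml; apply/andP; split; lra.
Qed.

Lemma dist2_curve_le x y : -1 < x -> x <= y -> dist2 (curve x) (curve y) <= y - x.
Proof. exact: (dist2_tangent_curve_le continuous_curve_angle). Qed.

Lemma derivable_curve t : -1 < t ->
  derivable (fun u => (curve u).1) t 1 /\ derivable (fun u => (curve u).2) t 1.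
Proof. exact: (derivable_tangent_curve continuous_curve_angle). Qed.

Lemma arc_length_curve b c : -1 < b -> b <= c ->
  arc_length curve b c = (c - b)%:E.
Proof.
exact: (arc_length_tangent_curve continuous_curve_angle curve_angle_nondecr).
Qed.

Lemma curve_inj : {in `[0, 2] &, injective curve}.
Proof.
apply: (tangent_curve_inj continuous_curve_angle) => [|t /[!in_itv] /andP[t0 t2]].
  by rewrite ltrN10.
by apply: cos_curve_angle_gt0; rewrite !ltW.
Qed.

Lemma sin_curve_angle_ge c : 1 <= c <= 2 ->
  cos 1 * Num.sqrt (c - 1) <= sin (curve_angle c).
Proof.
move=> c_in; apply: cos1_mul_sqrt_le_sin_signed_sqrt.
by apply/andP; split; lra.
Qed.

Lemma Nsin_curve_angle_ge c : 0 <= c <= 1 ->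
  cos 1 * Num.sqrt (1 - c) <= - sin (curve_angle c).
Proof.
move=> c_in; rewrite /curve_angle -(opprB 1 c) signed_sqrtN sinN opprK.
by apply: cos1_mul_sqrt_le_sin_signed_sqrt; apply/andP; split; lra.
Qed.

Lemma curve_rise m x y : -1 < x -> x <= y ->
  (forall c, x < c < y -> m <= sin (curve_angle c)) ->
  m * (y - x) <= (curve y).2 - (curve x).2.
Proof.
move=> x_gt x_le_y slope_ge.
rewrite (_ : (curve y).2 - (curve x).2 = 0 * (curve y).1 + 1 * (curve y).2 -
                     (0 * (curve x).1 + 1 * (curve x).2)); last by ring.
apply: (tangent_curve_proj_ge continuous_curve_angle) => // c /slope_ge.
by rewrite mul0r add0r mul1r.
Qed.

Lemma curve_descent m x y : -1 < x -> x <= y ->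
  (forall c, x < c < y -> m <= - sin (curve_angle c)) ->
  m * (y - x) <= (curve x).2 - (curve y).2.
Proof.
move=> x_gt x_le_y slope_ge.
rewrite (_ : (curve x).2 - (curve y).2 = 0 * (curve y).1 + -1 * (curve y).2 -
                     (0 * (curve x).1 + -1 * (curve x).2)); last by ring.
apply: (tangent_curve_proj_ge continuous_curve_angle) => // c /slope_ge.
by rewrite mul0r add0r mulN1r.
Qed.

Lemma curve_rise_right u : 0 < u <= 1 ->
  cos 1 * Num.sqrt (u / 2) * (u / 2) <= (curve (1 + u)).2 - (curve 1).2.
Proof.
move=> /andP[u0 u1]; have k0 := cos1_gt0 R.
have near : 0 <= (curve (1 + u / 2)).2 - (curve 1).2.
  rewrite -(mul0r (1 + u / 2 - 1)); apply: curve_rise; [lra|lra|] => c c_in.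
  apply: le_trans (sin_curve_angle_ge _).
    by rewrite mulr_ge0 ?sqrtr_ge0 ?ltW.
  by apply/andP; split; lra.
have far : cos 1 * Num.sqrt (u / 2) * (u / 2) <=
           (curve (1 + u)).2 - (curve (1 + u / 2)).2.
  rewrite {2}(_ : u / 2 = 1 + u - (1 + u / 2)); last by field.
  apply: curve_rise; [lra|lra|] => c c_in.
  apply: le_trans (sin_curve_angle_ge _); last by apply/andP; split; lra.
  by rewrite ler_pM2l // ler_sqrt; lra.
lra.
Qed.

Lemma curve_rise_left u : 0 < u <= 1 ->
  cos 1 * Num.sqrt (u / 2) * (u / 2) <= (curve (1 - u)).2 - (curve 1).2.
Proof.
move=> /andP[u0 u1]; have k0 := cos1_gt0 R.
have near : 0 <= (curve (1 - u / 2)).2 - (curve 1).2.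
  rewrite -(mul0r (1 - (1 - u / 2))); apply: curve_descent; [lra|lra|] => c c_in.
  apply: le_trans (Nsin_curve_angle_ge _).
    by rewrite mulr_ge0 ?sqrtr_ge0 ?ltW.
  by apply/andP; split; lra.
have far : cos 1 * Num.sqrt (u / 2) * (u / 2) <=
           (curve (1 - u)).2 - (curve (1 - u / 2)).2.
  rewrite {2}(_ : u / 2 = 1 - u / 2 - (1 - u)); last by field.
  apply: curve_descent; [lra|lra|] => c c_in.
  apply: le_trans (Nsin_curve_angle_ge _); last by apply/andP; split; lra.
  by rewrite ler_pM2l // ler_sqrt; lra.
lra.
Qed.

End Curve.

Lemma not_R_monotone_of_gap (R : realType) (s : R -> R * R) (L Rad rho p t q : R)
    (o : R * R) :
  0 <= p -> p < t < q -> q <= L -> 0 <= rho <= Rad ->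
  dist2 (s p) o <= rho -> dist2 (s q) o <= rho -> rho < dist2 (s t) o ->
  ~ R_monotone s L Rad.
Proof.
move=> p0 /andP[p_lt_t t_lt_q] q_le_L /andP[rho0 rho_le] sp_in sq_in st_out mono.
have /connected_intervalP/(_ p q) p_q_ball := mono o rho rho0 rho_le.
have [_ st_in] : (0 <= t <= L) /\ dist2 (s t) o <= rho.
  apply: p_q_ball; rewrite /= ?(ltW p_lt_t) ?(ltW t_lt_q) //.
  - by rewrite p0 (le_trans (ltW (lt_trans p_lt_t t_lt_q))).
  - by rewrite q_le_L (le_trans p0 (ltW (lt_trans p_lt_t t_lt_q))).
by move: st_out; rewrite ltNge st_in.
Qed.

Lemma curve_near_raised_centre (R : realType) (d : R) : 0 < d <= 1 ->
  let o := ((curve 1).1, (curve 1).2 + d) in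
  exists2 u, 0 < u <= 1 &
    dist2 (curve (1 - u)) o < d /\ dist2 (curve (1 + u)) o < d.
Proof.
move=> /andP[d0 d1] o; set k := cos (1 : R); have k0 : 0 < k := cos1_gt0 R.
have k1 : k <= 1 := cos_le1 1.
(* With u = 2 w^2 the squared chord length u^2 = 4 w^4 is beaten by
   2 d times the rise k w^3, which is 8 w^4. *)
set w := d * k / 4; set u := 2 * w ^+ 2.
have w0 : 0 < w by rewrite divr_gt0 ?mulr_gt0.
have dk_le1 : d * k <= 1 by apply: mulr_ile1 => //; exact: ltW.
have w_le : w <= 1 / 4 by rewrite /w; lra.
have ww_le : w * w <= 1 / 4 * (1 / 4) by apply: ler_pM => //; exact: ltW.
have u_in : 0 < u <= 1 by rewrite /u mulr_gt0 ?exprn_gt0 //= expr2; lra.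
exists u => //.
have small_u : u ^+ 2 < 2 * d * (k * w * w ^+ 2).
  have -> : 2 * d * (k * w * w ^+ 2) = 8 * w ^+ 4 by rewrite /w; field.
  have -> : u ^+ 2 = 4 * w ^+ 4 by rewrite /u; ring.
  by rewrite ltr_pM2r ?exprn_gt0 //; lra.
have rise_right := curve_rise_right u_in; have rise_left := curve_rise_left u_in.
have half_u : u / 2 = w ^+ 2 by rewrite /u mulrC mulKf.
rewrite half_u sqrtr_sqr gtr0_norm // -/k in rise_right rise_left.
split; apply: dist2_shift_up_lt d0 _ _ small_u => //.
- rewrite dist2C.
  by apply: le_trans (dist2_curve_le _ _) (_ : 1 - (1 - u) <= u); lra.
- by apply: le_trans (dist2_curve_le _ _) (_ : 1 + u - 1 <= u); lra.
Qed.

Lemma curve_not_R_monotone (R : realType) (Rad : R) : 0 < Rad ->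
  ~ R_monotone (@curve R) 2 Rad.
Proof.
move=> Rad0; set d := Num.min Rad 1.
have d_in : 0 < d <= 1 by rewrite lt_min Rad0 ltr01 ge_min lexx orbT.
have d_le_Rad : d <= Rad by rewrite ge_min lexx.
have [u u_in [near_left near_right]] := curve_near_raised_centre d_in.
set o := (_, _) in near_left near_right.
pose rho := Num.max (dist2 (curve (1 - u)) o) (dist2 (curve (1 + u)) o).
apply: (@not_R_monotone_of_gap _ _ _ _ rho (1 - u) 1 (1 + u) o).
- lra.
- by apply/andP; split; lra.
- lra.
- by rewrite le_max dist2_ge0 /= (le_trans _ d_le_Rad) // ltW // gt_max near_left.
- by rewrite le_max lexx.
- by rewrite le_max lexx orbT.
- by rewrite dist2_shift_up ?gt_max ?near_left //; case/andP: d_in => /ltW.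
Qed.

Unset Implicit Arguments.

Theorem mainTheorem2 (R : realType) :
  exists (s : R -> R * R) (L : R),
    0 < L /\
    arclength_param s L /\
    (arc_length s 0 L < +oo)%E /\
    {within `[0, L], continuous (fun t => (s t).1)} /\
    {within `[0, L], continuous (fun t => (s t).2)} /\
    (forall t, 0 <= t <= L ->
       derivable (fun u => (s u).1) t 1 /\ derivable (fun u => (s u).2) t 1) /\
    {in `[0, L] &, injective s} /\
    (forall Rad : R, 0 < Rad -> ~ R_monotone s L Rad).
Proof.
exists (@curve R), 2.
have curve_derivable t : 0 <= t ->
    derivable (fun u => (curve u).1) t 1 /\ derivable (fun u => (curve u).2) t 1.
  by move=> t0; apply: derivable_curve; lra.
split; first lra.
split; first by move=> t /andP[t0 _]; rewrite arc_length_curve ?subr0 //; lra.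
split; first by rewrite arc_length_curve ?ltry //; lra.
split.
  by apply: derivable_within_continuous => t /[!in_itv] /andP[/curve_derivable[]].
split.
  by apply: derivable_within_continuous => t /[!in_itv] /andP[/curve_derivable[]].
split; first by move=> t /andP[/curve_derivable].
by split; [exact: curve_inj | exact: curve_not_R_monotone].
Qed.
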